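(* 1) Assume $\Delta$ is of type $SL_n$ and let $u\in GL_n(R)$. Then for every $v\in G_u$ we have $\delta(\det(v))=0$. 2) Assume $\Delta$ is of type $SO(q)$ and let $u\in SO(q)$. Then for every $v\in G_u$ we have $\delta(v^tqv)=0$.
   Context: Let $p$ be an odd prime, $R$ the unique complete discrete valuation ring with maximal ideal $pR$ and residue field an algebraic closure of $\mathbb F_p$; $\phi$ the unique lift of Frobenius, $\delta a=(\phi(a)-a^p)/p$; on matrices $\phi,\delta$ act entrywise, $u^{(p)}=(u_{ij}^p)$. $x$ an $n\times n$ matrix of indeterminates, $A=R[x,\det(x)^{-1}]^\wedge$. For $\Delta\in\mathfrak{gl}_n(A)$, $\Phi(x)=x^{(p)}+p\Delta(x)$, and for $u\in GL_n(R)$, $G_u=\{v\in GL_n(R):\phi(v)=\Phi(u)^{-1}\Phi(uv)\}$. Type $SL_n$: $p\nmid n$, $\Delta(x)=\frac{\lambda(x)-1}{p}x^{(p)}$, $\lambda(x)=(\det(x^{(p)})/\det(x)^p)^{-1/n}$ via the binomial series $(1+pt)^a$, $a\in\mathbb Z_p$. Type $SO(q)$: $q$ one of $\begin{pmatrix}0&1_r\\-1_r&0\end{pmatrix}$, $\begin{pmatrix}0&1_r\\1_r&0\end{pmatrix}$ ($n=2r$), $\begin{pmatrix}1&0&0\\0&0&1_r\\0&1_r&0\end{pmatrix}$ ($n=2r+1$); $SO(q)$ the identity component of $\{x^tqx=q\}$; $\Lambda(x)=(((x^{(p)})^tqx^{(p)})^{-1}(x^tqx)^{(p)})^{1/2}$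 via the binomial series; $\Delta(x)=x^{(p)}\frac{\Lambda(x)-1}{p}$. *)

From HB Require Import structures.
From mathcomp Require Import all_boot all_order all_algebra.
From Stdlib Require Import ClassicalEpsilon.
Set Implicit Arguments. Unset Strict Implicit. Unset Printing Implicit Defensive.
Import Order.TTheory GRing.Theory Num.Theory.
Local Open Scope ring_scope.

Section Defs.
Variable R : idomainType.
Variable p : nat.

Definition dvdR (a b : R) : Prop := exists c, b = a * c.

Definition padic_lim (s : nat -> R) (L : R) : Prop :=
  forall k : nat, exists N : nat, forall m, (N <= m)%N -> dvdR (p%:R ^+ k) (s m - L).
Definition padic_cauchy (s : nat -> R) : Prop :=
  forall k : nat, exists N : nat, forall m m', (N <= m)%N -> (N <= m')%N ->
    dvdR (p%:R ^+ k) (s m - s m').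
Definition padic_lim_mx n (s : nat -> 'M[R]_n) (L : 'M[R]_n) : Prop :=
  forall i j, padic_lim (fun m => s m i j) (L i j).

(** R is the complete DVR with maximal ideal pR and residue field an algebraic
    closure of F_p (p an odd prime), and phi is a lift of Frobenius. *)
Record W_setting (phi : R -> R) : Prop := {
  p_prime : prime p;
  p_odd : odd p;
  p_neq0 : p%:R != 0 :> R;
  p_nonunit : (p%:R : R) \isn't a GRing.unit;
  nonunit_dvd : forall x : R, x \isn't a GRing.unit -> dvdR p%:R x;
  separated : forall x : R, (forall k, dvdR (p%:R ^+ k) x) -> x = 0;
  complete : forall s, padic_cauchy s -> exists L, padic_lim s L;
  residue_closed : forall P : {poly R}, P \is monic -> (1 < size P)%N ->
    exists r, dvdR p%:R P.[r];
  residue_algebraic : forall x : R, exists m, (0 < m)%N /\ dvdR p%:R (x ^+ (p ^ m) - x);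
  frob_lift : forall a, dvdR p%:R (phi a - a ^+ p) }.

Definition divp (a : R) : R := epsilon (inhabits 0) (fun c => a = p%:R * c).

Definition delta (phi : R -> R) (a : R) : R := divp (phi a - a ^+ p).

Definition frobp n (x : 'M[R]_n) : 'M[R]_n := map_mx (fun a => a ^+ p) x.

Definition binom_coef (a : rat) (j : nat) : rat :=
  (\prod_(i < j) (a - i%:R)) / (j`!)%:R.

(** (1 + p t)^a := sum_j binom(a,j) (p t)^j  (p-adic limit), evaluated at y = 1 + p t *)
Definition binom_terms (a : rat) (y : R) : nat -> R :=
  fun m => \sum_(j < m) ratr (binom_coef a j) * (y - 1) ^+ j.
Definition binom_pow (a : rat) (y : R) : R :=
  epsilon (inhabits 0) (fun L => padic_lim (binom_terms a y) L).

Definition binom_terms_mx n (a : rat) (Y : 'M[R]_n) : nat -> 'M[R]_n :=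
  fun m => \sum_(j < m) ratr (binom_coef a j) *: (Y - 1%:M) ^+ j.
Definition binom_pow_mx n (a : rat) (Y : 'M[R]_n) : 'M[R]_n :=
  epsilon (inhabits 0) (fun L => padic_lim_mx (binom_terms_mx a Y) L).

Definition lambdaSL n (x : 'M[R]_n) : R :=
  binom_pow (- (n%:Q)^-1) (\det (frobp x) / (\det x) ^+ p).
Definition DeltaSL n (x : 'M[R]_n) : 'M[R]_n :=
  divp (lambdaSL x - 1) *: frobp x.
Definition PhiSL n (x : 'M[R]_n) : 'M[R]_n := frobp x + p%:R *: DeltaSL x.

Definition LambdaSO n (q x : 'M[R]_n) : 'M[R]_n :=
  binom_pow_mx (1 / 2%:R)
    (invmx ((frobp x)^T *m q *m frobp x) *m frobp (x^T *m q *m x)).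
Definition DeltaSO n (q x : 'M[R]_n) : 'M[R]_n :=
  frobp x *m map_mx divp (LambdaSO q x - 1%:M).
Definition PhiSO n (q x : 'M[R]_n) : 'M[R]_n := frobp x + p%:R *: DeltaSO q x.

Definition inG n (Phi : 'M[R]_n -> 'M[R]_n) (phi : R -> R) (u v : 'M[R]_n) : Prop :=
  v \in unitmx /\ map_mx phi v = invmx (Phi u) *m Phi (u *m v).

Definition q_alt r : 'M[R]_(r + r) := block_mx 0 1%:M (- 1%:M) 0.
Definition q_sym r : 'M[R]_(r + r) := block_mx 0 1%:M 1%:M 0.
Definition q_odd r : 'M[R]_(1 + (r + r)) := block_mx 1%:M 0 0 (q_sym r).

End Defs.

(** The maps [Phi] carry the defining invariant of the group to its Frobenius
    twist exactly, not only modulo [p]: [det Phi(x) = (det x)^p] in type [SL_n],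
    because [lambda(x)^n det(x^(p)) = (det x)^p]; and
    [Phi(x)^t q Phi(x) = (x^t q x)^(p)] in type [SO(q)], because [Lambda(x)] is a
    square root of [A^-1 (x^t q x)^(p)], [A = (x^(p))^t q x^(p)], which is
    self-adjoint for [A].  Applied to [phi(v) = Phi(u)^-1 Phi(uv)], together with
    the multiplicativity of [det], resp. [u^t q u = q], this gives
    [phi(det v) = (det v)^p], resp. [phi(v^t q v) = (v^t q v)^(p)], i.e. [delta]
    vanishes.  The identities [(1 + pT)^a (1 + pT)^b = (1 + pT)^(a + b)] behind
    [lambda] and [Lambda] follow from Vandermonde's identity, once the binomial
    coefficients of a [p]-integral rational are known to be [p]-integral. *)

From Pilot Require Import Defs.
From HB Require Import structures.
From mathcomp Require Import all_boot all_order all_algebra.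
From mathcomp Require Import perm ring zify.
From Stdlib Require Import ClassicalEpsilon.
Set Implicit Arguments. Unset Strict Implicit. Unset Printing Implicit Defensive.
Import Order.TTheory GRing.Theory Num.Theory.
Local Open Scope ring_scope.

Section Divisibility.
Variable R : idomainType.
Implicit Types a b x y : R.

Lemma dvdR0 a : dvdR a 0. Proof. by exists 0; rewrite mulr0. Qed.

Lemma dvdRD a x y : dvdR a x -> dvdR a y -> dvdR a (x + y).
Proof. by move=> [c ->] [d ->]; exists (c + d); rewrite mulrDr. Qed.

Lemma dvdRN a x : dvdR a x -> dvdR a (- x).
Proof. by move=> [c ->]; exists (- c); rewrite mulrN. Qed.

Lemma dvdRB a x y : dvdR a x -> dvdR a y -> dvdR a (x - y).
Proof. by move=> ax ay; apply/dvdRD/dvdRN. Qed.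

Lemma dvdRMr a x y : dvdR a x -> dvdR a (x * y).
Proof. by move=> [c ->]; exists (c * y); rewrite mulrA. Qed.

Lemma dvdRMl a x y : dvdR a x -> dvdR a (y * x).
Proof. by rewrite mulrC; apply: dvdRMr. Qed.

Lemma dvdRMM a b x y : dvdR a x -> dvdR b y -> dvdR (a * b) (x * y).
Proof. by move=> [c ->] [d ->]; exists (c * d); rewrite mulrACA. Qed.

Lemma dvdR_trans a b x : dvdR a b -> dvdR b x -> dvdR a x.
Proof. by move=> [c ->] [d ->]; exists (c * d); rewrite mulrA. Qed.

Lemma dvdR_sum a I (r : seq I) (P : pred I) (F : I -> R) :
  (forall i, P i -> dvdR a (F i)) -> dvdR a (\sum_(i <- r | P i) F i).
Proof. by move=> aF; apply: big_ind => //; [apply: dvdR0 | apply: dvdRD]. Qed.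

Lemma dvdR_exp2l a k l x : (k <= l)%N -> dvdR (a ^+ l) x -> dvdR (a ^+ k) x.
Proof. by move=> kl; apply: dvdR_trans; exists (a ^+ (l - k)); rewrite -exprD subnKC. Qed.

Lemma dvdR_subr a x y z : dvdR a (y - x) -> dvdR a (y - z) -> dvdR a (x - z).
Proof.
have -> : x - z = (y - z) - (y - x) by rewrite opprB [in RHS]addrC addrA subrK.
by move=> ayx ayz; apply: dvdRB.
Qed.

Definition dvdmx m n a (X : 'M[R]_(m, n)) := forall i j, dvdR a (X i j).

Lemma dvdmx0 m n a : dvdmx a (0 : 'M_(m, n)).
Proof. by move=> i j; rewrite mxE; apply: dvdR0. Qed.

Lemma dvdmxD m n a (X Y : 'M_(m, n)) : dvdmx a X -> dvdmx a Y -> dvdmx a (X + Y).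
Proof. by move=> aX aY i j; rewrite mxE; apply: dvdRD. Qed.

Lemma dvdmxN m n a (X : 'M_(m, n)) : dvdmx a X -> dvdmx a (- X).
Proof. by move=> aX i j; rewrite mxE; apply: dvdRN. Qed.

Lemma dvdmxB m n a (X Y : 'M_(m, n)) : dvdmx a X -> dvdmx a Y -> dvdmx a (X - Y).
Proof. by move=> aX aY; apply/dvdmxD/dvdmxN. Qed.

Lemma dvdmx_subC m n a (X Y : 'M_(m, n)) : dvdmx a (X - Y) -> dvdmx a (Y - X).
Proof. by move=> aXY; rewrite -opprB; apply: dvdmxN. Qed.

Lemma dvdmx_subr m n a (X Y Z : 'M_(m, n)) :
  dvdmx a (Y - X) -> dvdmx a (Y - Z) -> dvdmx a (X - Z).
Proof. by move=> aYX aYZ i j; have := aYZ i j; have := aYX i j; rewrite !mxE; apply: dvdR_subr. Qed.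

Lemma dvdmxZ m n a c (X : 'M_(m, n)) : dvdmx a X -> dvdmx a (c *: X).
Proof. by move=> aX i j; rewrite mxE; apply: dvdRMl. Qed.

Lemma dvdmx_exp2l m n a k l (X : 'M_(m, n)) :
  (k <= l)%N -> dvdmx (a ^+ l) X -> dvdmx (a ^+ k) X.
Proof. by move=> kl aX i j; apply: dvdR_exp2l kl _. Qed.

Lemma dvdmx_tr m n a (X : 'M_(m, n)) : dvdmx a X -> dvdmx a X^T.
Proof. by move=> aX i j; rewrite mxE. Qed.

Lemma dvdmx_mulmx m n l a b (X : 'M_(m, n)) (Y : 'M_(n, l)) :
  dvdmx a X -> dvdmx b Y -> dvdmx (a * b) (X *m Y).
Proof. by move=> aX bY i j; rewrite mxE; apply: dvdR_sum => k _; apply: dvdRMM. Qed.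

Lemma dvdmx_mull m n l a (X : 'M_(m, n)) (Y : 'M_(n, l)) :
  dvdmx a X -> dvdmx a (X *m Y).
Proof. by move=> aX i j; rewrite mxE; apply: dvdR_sum => k _; apply: dvdRMr. Qed.

Lemma dvdmx_mulr m n l a (X : 'M_(m, n)) (Y : 'M_(n, l)) :
  dvdmx a Y -> dvdmx a (X *m Y).
Proof. by move=> aY i j; rewrite mxE; apply: dvdR_sum => k _; apply: dvdRMl. Qed.

Lemma dvdmx_exp n a (T : 'M_n) k : dvdmx a T -> dvdmx (a ^+ k) (T ^+ k).
Proof.
move=> aT; elim: k => [|k IHk]; first by move=> i j; exists (1%:M i j); rewrite mul1r.
by rewrite exprS exprS -mulmxE; apply: dvdmx_mulmx.
Qed.

End Divisibility.

(** * Frobenius modulo p *)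

Section ModpArithmetic.
Variables (R : idomainType) (p : nat) (phi : R -> R).
Hypothesis HW : W_setting p phi.
Local Notation P := (p%:R : R).

Lemma p_gt0 : (0 < p)%N. Proof. exact/prime_gt0/(p_prime HW). Qed.

Lemma dvdR_natr m : (p %| m)%N -> dvdR P (m%:R : R).
Proof. by move=> /dvdnP [c ->]; exists c%:R; rewrite natrM mulrC. Qed.

Lemma sign_expp (e : R) : e * e = 1 -> e ^+ p = e.
Proof.
move=> ee; rewrite -[p]odd_double_half (p_odd HW) add1n exprS -mul2n exprM.
by rewrite expr2 ee expr1n mulr1.
Qed.

Lemma unitr_congr_p a b : a \is a GRing.unit -> dvdR P (b - a) -> b \is a GRing.unit.
Proof.
move=> ua ba; apply/negPn/negP => /(nonunit_dvd HW) pb.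
have [c ac] : dvdR P a by rewrite -[a](subKr b); apply: dvdRB.
move/negP: (p_nonunit HW); apply; apply/unitrPr.
by exists (c * a^-1); rewrite mulrA -ac mulrV.
Qed.

Lemma mulr_p_divp a : dvdR P a -> P * Defs.divp p a = a.
Proof.
move=> [c ac]; apply/esym/(epsilon_spec (inhabits 0) (fun c => a = P * c)).
by exists c.
Qed.

Lemma scale_p_map_divp m n (X : 'M[R]_(m, n)) :
  dvdmx P X -> P *: map_mx (Defs.divp p) X = X.
Proof. by move=> PX; apply/matrixP => i j; rewrite !mxE mulr_p_divp. Qed.

Lemma delta_frob a : phi a = a ^+ p -> delta p phi a = 0.
Proof.
move=> phia; rewrite /delta phia subrr.
have := mulr_p_divp (dvdR0 P); move/eqP; rewrite mulf_eq0 (negPf (p_neq0 HW)) /=.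
by move/eqP.
Qed.

Lemma map_mx_delta_frob n (X : 'M[R]_n) :
  map_mx phi X = frobp p X -> map_mx (delta p phi) X = 0.
Proof.
move=> /matrixP phiX; apply/matrixP => i j; have := phiX i j.
by rewrite !mxE; apply: delta_frob.
Qed.

Lemma dvdR_expDp a b : dvdR P ((a + b) ^+ p - (a ^+ p + b ^+ p)).
Proof.
rewrite exprDn; case Ep: p p_gt0 => [//|q] _.
rewrite big_ord_recr big_ord_recl /= !subnn subn0 expr0 mulr1 mul1r !bin0 binn !mulr1n.
rewrite addrAC [X in X - _]addrC addrK; apply: dvdR_sum => i _.
rewrite -[_ *+ 'C(_, _)]mulr_natr -Ep; apply: dvdRMl; apply: dvdR_natr.
by rewrite prime_dvd_bin ?(p_prime HW) // Ep ltnS ltn_ord.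
Qed.

Lemma dvdR_exp_sum I (r : seq I) (Q : pred I) (F : I -> R) :
  dvdR P ((\sum_(i <- r | Q i) F i) ^+ p - \sum_(i <- r | Q i) F i ^+ p).
Proof.
apply: (big_rec2 (fun x y => dvdR P (x ^+ p - y))).
  by rewrite expr0n /= (negPf (lt0n_neq0 p_gt0)) subrr; apply: dvdR0.
move=> i y1 y2 _ IH.
have -> : (F i + y1) ^+ p - (F i ^+ p + y2) =
  ((F i + y1) ^+ p - (F i ^+ p + y1 ^+ p)) + (y1 ^+ p - y2) by ring.
exact: dvdRD (dvdR_expDp _ _) IH.
Qed.

Lemma dvdR_det_frobp n (x : 'M[R]_n) : dvdR P (\det (frobp p x) - \det x ^+ p).
Proof.
rewrite -opprB; apply: dvdRN.
suff -> : \det (frobp p x) = \sum_(s : 'S_n) ((-1) ^+ s * \prod_i x i (s i)) ^+ p.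
  exact: dvdR_exp_sum.
apply: eq_bigr => s _; rewrite exprMn sign_expp; last by rewrite -expr2 sqrr_sign.
by rewrite -prodrXl; congr (_ * _); apply: eq_bigr => i _; rewrite mxE.
Qed.

Lemma dvdmx_frobp_mulmx n (X Y : 'M[R]_n) :
  dvdmx P (frobp p (X *m Y) - frobp p X *m frobp p Y).
Proof.
move=> i j; rewrite !mxE.
have -> : \sum_k frobp p X i k * frobp p Y k j = \sum_k (X i k * Y k j) ^+ p.
  by apply: eq_bigr => k _; rewrite !mxE exprMn.
exact: dvdR_exp_sum.
Qed.

Lemma frobp_tr n (X : 'M[R]_n) : frobp p X^T = (frobp p X)^T.
Proof. by apply/matrixP => i j; rewrite !mxE. Qed.

Lemma frobpZ n c (X : 'M[R]_n) : frobp p (c *: X) = c ^+ p *: frobp p X.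
Proof. by apply/matrixP => i j; rewrite !mxE exprMn. Qed.

Lemma unitmx_frobp n (x : 'M[R]_n) : x \in unitmx -> frobp p x \in unitmx.
Proof.
rewrite !unitmxE => ux; apply: (unitr_congr_p (unitrX p ux)).
exact: dvdR_det_frobp.
Qed.

End ModpArithmetic.

(** * p-integral rationals and binomial coefficients *)

Lemma denq_dvd (x : rat) (n d : int) : x * d%:~R = n%:~R -> (`|denq x| %| `|d|)%N.
Proof.
move=> xd; have e : numq x * d = n * denq x.
  by apply: (@intr_inj rat); rewrite !intrM numqE -xd; ring.
have : (`|denq x| %| `|numq x| * `|d|)%N by rewrite -abszM e abszM dvdn_mull.
by rewrite Gauss_dvdr // coprime_sym coprime_num_den.
Qed.

Lemma dvdz_prodB (K : int) j (f g : nat -> int) : (forall i, (K %| f i - g i)%Z) ->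
  (K %| \prod_(i < j) f i - \prod_(i < j) g i)%Z.
Proof.
move=> Kfg; elim: j => [|j IHj]; first by rewrite !big_ord0 subrr dvdz0.
rewrite !big_ord_recr /=.
have -> : (\prod_(i < j) f i) * f j - (\prod_(i < j) g i) * g j =
  (\prod_(i < j) f i - \prod_(i < j) g i) * f j + (\prod_(i < j) g i) * (f j - g j) by ring.
by apply: rpredD; [apply: dvdz_mulr | apply: dvdz_mull].
Qed.

Lemma prodz_ffact N j : (j <= N)%N -> \prod_(i < j) (N%:Z - i%:Z) = (N ^_ j)%:Z.
Proof.
elim: j => [|j IHj] jN; first by rewrite big_ord0.
by rewrite big_ord_recr /= IHj ?ffactnSr ?PoszM ?subzn // ltnW.
Qed.

(* [N] lifts [u / d] modulo [K]. *)
Lemma exists_nat_congr (K d u : int) j : coprimez d K -> (0 < K)%R ->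
  exists N : nat, (j <= N)%N /\ (K %| u - d * N%:Z)%Z.
Proof.
move=> /eqP dK K_gt0; have [s [t]] := Bezoutz d K; rewrite dK => Bst.
pose N : int := s * u + K * (`|s * u|%:Z + j%:Z).
have jN : (j%:Z <= N)%R.
  have : (`|s * u|%:Z + j%:Z <= K * (`|s * u|%:Z + j%:Z))%R by rewrite ler_peMl //; lia.
  rewrite /N; lia.
exists `|N|%N; split; first by rewrite -lez_nat gez0_abs //; apply: le_trans jN.
rewrite gez0_abs; last by apply: le_trans jN.
have -> : u - d * N = (u * t - d * (`|s * u|%:Z + j%:Z)) * K.
  by rewrite -[X in X - _]mulr1 -Bst /N; ring.
exact/dvdz_mull/dvdzz.
Qed.

Section PIntegral.
Variables (R : idomainType) (p : nat) (phi : R -> R).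
Hypothesis HW : W_setting p phi.
Local Notation P := (p%:R : R).

Definition p_integral (x : rat) := ~~ (p %| `|denq x|)%N.

Lemma unitr_intr (z : int) : ~~ (p %| `|z|)%N -> (z%:~R : R) \is a GRing.unit.
Proof.
move=> pNz; apply/negPn/negP => /(nonunit_dvd HW) [c zc].
have /eqP pz : coprimez p z by rewrite coprimezE prime_coprime // (p_prime HW).
have [u [v]] := Bezoutz p z; rewrite pz => /(congr1 (fun w => w%:~R : R)).
rewrite rmorph1 rmorphD !rmorphM /= zc -[(p%:Z)%:~R]pmulrn => uv.
move/negP: (p_nonunit HW); apply; apply/unitrPr.
by exists (u%:~R + v%:~R * c); rewrite -[in RHS]uv; ring.
Qed.

Lemma p_integral_frac x (n d : int) : ~~ (p %| `|d|)%N ->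
  x * d%:~R = n%:~R -> p_integral x.
Proof. by move=> pNd /denq_dvd xd; apply: contra pNd => /dvdn_trans; apply. Qed.

Lemma ratr_frac x (r : R) (n d : int) : ~~ (p %| `|d|)%N ->
  x * d%:~R = n%:~R -> r * d%:~R = n%:~R -> ratr x = r.
Proof.
move=> pNd xd rd; have px := p_integral_frac pNd xd.
have e : numq x * d = n * denq x.
  by apply: (@intr_inj rat); rewrite !intrM numqE -xd; ring.
apply: (mulIr (unitr_intr pNd)); rewrite rd; apply: (mulIr (unitr_intr px)).
by rewrite /ratr mulrAC divrK ?unitr_intr // -!intrM e.
Qed.

Lemma ratr_numden x : p_integral x -> ratr x * (denq x)%:~R = (numq x)%:~R :> R.
Proof. by move=> px; rewrite /ratr divrK ?unitr_intr. Qed.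

Lemma p_ndvd_denqM x y : p_integral x -> p_integral y ->
  ~~ (p %| `|(denq x * denq y)%R|)%N.
Proof. by move=> px py; rewrite abszM Euclid_dvdM ?(p_prime HW) // negb_or; apply/andP. Qed.

Lemma p_integralD x y : p_integral x -> p_integral y ->
  p_integral (x + y) /\ ratr (x + y) = ratr x + ratr y :> R.
Proof.
move=> px py; pose n := numq x * denq y + numq y * denq x.
have xyd : (x + y) * (denq x * denq y)%:~R = n%:~R.
  by rewrite /n !intrD !intrM !numqE; ring.
split; first exact: p_integral_frac (p_ndvd_denqM px py) xyd.
apply: ratr_frac (p_ndvd_denqM px py) xyd _.
by rewrite /n intrD !intrM -(ratr_numden px) -(ratr_numden py); ring.
Qed.

Lemma p_integralM x y : p_integral x -> p_integral y ->
  p_integral (x * y) /\ ratr (x * y) = ratr x * ratr y :> R.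
Proof.
move=> px py; have xyd : x * y * (denq x * denq y)%:~R = (numq x * numq y)%:~R.
  by rewrite !intrM !numqE; ring.
split; first exact: p_integral_frac (p_ndvd_denqM px py) xyd.
apply: ratr_frac (p_ndvd_denqM px py) xyd _.
by rewrite !intrM -(ratr_numden px) -(ratr_numden py); ring.
Qed.

Lemma p_integral_int (z : int) : p_integral z%:~R.
Proof.
by rewrite /p_integral denq_int dvdn1; apply/eqP => p1; move: (p_prime HW); rewrite p1.
Qed.

Lemma p_integral_sum I (r : seq I) (Q : pred I) (F : I -> rat) :
  (forall i, Q i -> p_integral (F i)) ->
  p_integral (\sum_(i <- r | Q i) F i) /\
  ratr (\sum_(i <- r | Q i) F i) = \sum_(i <- r | Q i) ratr (F i) :> R.
Proof.
move=> pF; apply: (big_ind2 (fun x y => p_integral x /\ ratr x = y)).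
- by split; [apply: (p_integral_int 0) | rewrite /ratr /= mul0r].
- move=> x1 x2 y1 y2 [px1 <-] [px2 <-]; exact: p_integralD.
- by move=> i Qi; split => //; apply: pF.
Qed.

(* Modulo [p ^ v_p(j!)] the product is [d ^ j] times [N ^_ j = j! 'C(N, j)]. *)
Lemma dvdz_pfactor_fact_prod (u d : int) j : ~~ (p %| `|d|)%N ->
  ((p ^ logn p j`!)%:Z %| \prod_(i < j) (u - i%:Z * d))%Z.
Proof.
move=> pNd; set K := (p ^ logn p j`!)%:Z.
have dK : coprimez d K.
  by rewrite coprimezE /= coprime_sym coprimeXl // prime_coprime ?(p_prime HW).
have K_gt0 : (0 < K)%R by rewrite ltz_nat expn_gt0 (p_gt0 HW).
have [N [jN KuN]] := exists_nat_congr u j dK K_gt0.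
have dN : \prod_(i < j) (d * N%:Z - i%:Z * d) = d ^+ j * (N ^_ j)%:Z.
  transitivity (\prod_(i < j) (d * (N%:Z - i%:Z))); first by apply: eq_bigr => i _; ring.
  by rewrite big_split /= prodr_const card_ord prodz_ffact.
rewrite -[\prod_(i < j) _](subrK (\prod_(i < j) (d * N%:Z - i%:Z * d))) {2}dN.
apply: rpredD.
  apply: (@dvdz_prodB K j (fun i => u - i%:Z * d) (fun i => d * N%:Z - i%:Z * d)) => i.
  by have -> : u - i%:Z * d - (d * N%:Z - i%:Z * d) = u - d * N%:Z by ring.
by apply: dvdz_mull; rewrite -bin_ffact dvdzE /= dvdn_mull // pfactor_dvdnn.
Qed.

Lemma p_integral_binom a j : p_integral a -> p_integral (binom_coef a j).
Proof.
move=> pa; have pP := p_prime HW.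
have [m pm jfact] := pfactor_coprime pP (fact_gt0 j).
set v := logn p j`! in jfact.
have /dvdzP [Q eQ] := dvdz_pfactor_fact_prod (numq a) j pa.
have m_neq0 : (m%:R : rat) != 0.
  by rewrite pnatr_eq0; apply: contraTneq pm => ->; rewrite /coprime gcdn0 gtn_eqF ?prime_gt1.
have pv_neq0 : ((p ^ v)%:R : rat) != 0.
  by rewrite pnatr_eq0 expn_eq0 negb_and -lt0n prime_gt0.
have prod_den : (\prod_(i < j) (a - i%:R)) * (denq a)%:~R ^+ j = Q%:~R * (p ^ v)%:R.
  transitivity (\prod_(i < j) ((a - i%:R) * (denq a)%:~R)).
    by rewrite big_split /= prodr_const card_ord.
  rewrite pmulrn -intrM -eQ rmorph_prod.
  by apply: eq_bigr => i _; rewrite rmorphB rmorphM /= numqE -pmulrn; ring.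
apply: (p_integral_frac (n := Q) (d := denq a ^+ j * m%:Z)).
  rewrite abszM abszX Euclid_dvdM // Euclid_dvdX // negb_or negb_and (negPf pa) /=.
  by rewrite -prime_coprime.
apply: (mulIf pv_neq0); rewrite -prod_den /binom_coef jfact natrM intrM.
by rewrite [(denq a ^+ j)%:~R]rmorphXn -pmulrn; field; apply/andP.
Qed.

Lemma p_integral_half : p_integral (1 / 2%:R).
Proof.
apply: (p_integral_frac (n := 1) (d := 2)); last by rewrite mul1r mulVf.
apply/negP => /(@dvdn_leq p 2 isT) p_le2; move: (p_odd HW).
by have -> : p = 2%N by apply/eqP; rewrite eqn_leq p_le2 prime_gt1 ?(p_prime HW).
Qed.

End PIntegral.

Lemma binom_coef0 a : binom_coef a 0 = 1.
Proof. by rewrite /binom_coef big_ord0 divr1. Qed.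

Lemma binom_coefS a j : binom_coef a j.+1 * j.+1%:R = binom_coef a j * (a - j%:R).
Proof.
rewrite /binom_coef big_ord_recr /= factS natrM.
have j1_neq0 : (1 + j%:R : rat) != 0 by rewrite addrC natr1 pnatr_eq0.
by field; rewrite pnatr_eq0 -lt0n fact_gt0 j1_neq0.
Qed.

Lemma vandermonde_step a b k :
  (\sum_(i < k.+2) binom_coef a i * binom_coef b (k.+1 - i)) * k.+1%:R =
  (\sum_(i < k.+1) binom_coef a i * binom_coef b (k - i)) * (a + b - k%:R).
Proof.
have split_k1 (i : 'I_k.+2) : binom_coef a i * binom_coef b (k.+1 - i) * k.+1%:R =
    binom_coef a i * binom_coef b (k.+1 - i) * i%:R +
    binom_coef a i * binom_coef b (k.+1 - i) * (k.+1 - i)%N%:R.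
  by rewrite -mulrDr -natrD subnKC // -ltnS.
rewrite mulr_suml (eq_bigr _ (fun i _ => split_k1 i)) big_split /=.
rewrite big_ord_recl mulr0 add0r [X in _ + X]big_ord_recr /= subnn mulr0 addr0.
rewrite mulr_suml -big_split /=; apply: eq_bigr => i _.
have ik : (i <= k)%N by rewrite -ltnS.
rewrite /bump leq0n add1n subSS mulrAC binom_coefS subSn // -mulrA binom_coefS natrB //.
ring.
Qed.

Lemma binom_coef_vandermonde a b k :
  binom_coef (a + b) k = \sum_(i < k.+1) binom_coef a i * binom_coef b (k - i).
Proof.
elim: k => [|k IHk]; first by rewrite big_ord1 !binom_coef0 mulr1.
have k1_neq0 : (k.+1%:R : rat) != 0 by rewrite pnatr_eq0.
by apply: (mulIf k1_neq0); rewrite vandermonde_step binom_coefS IHk.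
Qed.

(** * The binomial series of a matrix congruent to 1 *)

Section PadicMatrixLimits.
Variables (R : idomainType) (p : nat) (phi : R -> R).
Hypothesis HW : W_setting p phi.
Local Notation P := (p%:R : R).

Lemma dvdmx_expp_eq0 n (X : 'M[R]_n) : (forall k, dvdmx (P ^+ k) X) -> X = 0.
Proof. by move=> PX; apply/matrixP => i j; rewrite mxE; apply: (separated HW) => k; apply: PX. Qed.

(* Unlike [padic_lim_mx], the rank [N] is uniform in the entries. *)
Definition mx_lim n (s : nat -> 'M[R]_n) L :=
  forall k, exists N, forall m, (N <= m)%N -> dvdmx (P ^+ k) (s m - L).

Lemma mx_limP n (s : nat -> 'M[R]_n) L : mx_lim s L <-> padic_lim_mx p s L.
Proof.
split=> [sL i j k | sL k].
  by have [N sN] := sL k; exists N => m /sN /(_ i j); rewrite !mxE.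
pose Nk i j := epsilon (inhabits 0%N)
  (fun N => forall m, (N <= m)%N -> dvdR (P ^+ k) (s m i j - L i j)).
have NkP i j m : (Nk i j <= m)%N -> dvdR (P ^+ k) (s m i j - L i j).
  exact: (epsilon_spec (inhabits 0%N) _ (sL i j k)).
exists (\max_i \max_j Nk i j) => m Nm i j; rewrite !mxE; apply: NkP.
by apply: leq_trans Nm; apply: leq_trans (leq_bigmax i); apply: (leq_bigmax j).
Qed.

Lemma mx_lim_unique n (s : nat -> 'M[R]_n) L L' : mx_lim s L -> mx_lim s L' -> L = L'.
Proof.
move=> sL sL'; apply/eqP; rewrite -subr_eq0; apply/eqP/dvdmx_expp_eq0 => k.
have [N sN] := sL k; have [N' sN'] := sL' k.
apply: (dvdmx_subr (Y := s (maxn N N'))).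
  by apply: sN; rewrite leq_maxl.
by apply: sN'; rewrite leq_maxr.
Qed.

Lemma mx_lim_cauchy n (s : nat -> 'M[R]_n) :
  (forall k, exists N, forall m m', (N <= m)%N -> (N <= m')%N ->
     dvdmx (P ^+ k) (s m - s m')) ->
  exists L, mx_lim s L.
Proof.
move=> sC; have sLij i j : exists l, padic_lim p (fun m => s m i j) l.
  apply: (complete HW) => k; have [N sN] := sC k.
  by exists N => m m' Nm Nm'; have := sN m m' Nm Nm' i j; rewrite !mxE.
exists (\matrix_(i, j) epsilon (inhabits 0) (padic_lim p (fun m => s m i j))).
by apply/mx_limP => i j; rewrite mxE; apply: epsilon_spec.
Qed.

Lemma mx_lim_eventually n (s : nat -> 'M[R]_n) L N :
  (forall m, (N <= m)%N -> s m = L) -> mx_lim s L.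
Proof. by move=> sL k; exists N => m /sL ->; rewrite subrr; apply: dvdmx0. Qed.

End PadicMatrixLimits.

Lemma binom_terms_mxS (R : idomainType) n a (Y : 'M[R]_n) m :
  binom_terms_mx a Y m.+1 =
  binom_terms_mx a Y m + ratr (binom_coef a m) *: (Y - 1%:M) ^+ m.
Proof. by rewrite /binom_terms_mx big_ord_recr. Qed.

Lemma binom_terms_mx1 (R : idomainType) n a (Y : 'M[R]_n) : binom_terms_mx a Y 1 = 1.
Proof. by rewrite /binom_terms_mx big_ord1 binom_coef0 (ratr_nat _ 1) expr0 scale1r. Qed.

Lemma binom_terms_mx_horner (R : idomainType) n a (Y : 'M[R]_n.+1) m :
  binom_terms_mx a Y m = horner_mx (Y - 1%:M) (\poly_(j < m) ratr (binom_coef a j)).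
Proof.
rewrite poly_def linear_sum /=; apply: eq_bigr => j _.
by rewrite linearZ /= rmorphXn /= horner_mx_X.
Qed.

Section BinomialSeries.
Variables (R : idomainType) (p : nat) (phi : R -> R).
Hypothesis HW : W_setting p phi.
Local Notation P := (p%:R : R).
Variables (n : nat) (Y : 'M[R]_n).
Hypothesis Y1 : dvdmx P (Y - 1%:M).
Local Notation S a := (binom_terms_mx a Y).
Local Notation L a := (binom_pow_mx p a Y).

Lemma binom_terms_mx_congr a k m : (k <= m)%N -> dvdmx (P ^+ k) (S a m - S a k).
Proof.
move=> /subnKC <-; elim: (m - k)%N => [|d IHd].
  by rewrite addn0 subrr; apply: dvdmx0.
rewrite addnS binom_terms_mxS addrAC; apply: dvdmxD IHd _; apply: dvdmxZ.
by apply: (dvdmx_exp2l (leq_addr d k)); apply: dvdmx_exp.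
Qed.

Lemma binom_pow_mxP a : mx_lim p (S a) (L a).
Proof.
have [L0 SL0] : exists L0, mx_lim p (S a) L0.
  apply: (mx_lim_cauchy HW) => k; exists k => m m' km km'.
  by apply: (dvdmx_subr (Y := S a k)); apply/dvdmx_subC/binom_terms_mx_congr.
apply/mx_limP/(epsilon_spec (inhabits 0) (padic_lim_mx p (S a))).
by exists L0; apply/mx_limP.
Qed.

Lemma binom_pow_mx_congr1 a : dvdmx P (L a - 1).
Proof.
have [N SN] := binom_pow_mxP a 1; set m := maxn N 1.
rewrite -(binom_terms_mx1 a Y); apply: (dvdmx_subr (Y := S a m)).
  by apply: SN; rewrite leq_maxl.
by rewrite -[P]expr1; apply: binom_terms_mx_congr; rewrite leq_maxr.
Qed.

(* By Vandermonde's identity, [X ^ m] divides the polynomial [S_a S_b - S_(a + b)]. *)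
Lemma binom_terms_mxM a b m : p_integral p a -> p_integral p b ->
  dvdmx (P ^+ m) (S a m * S b m - S (a + b) m).
Proof.
move: Y Y1; case: n => [|n'] Y' Y'1 pa pb; first by move=> [].
rewrite !binom_terms_mx_horner -rmorphM -rmorphB /=.
set D := (X in horner_mx _ X).
have tD : take_poly m D = 0.
  apply/polyP => i; rewrite coef_take_poly coef0; case: ltnP => // im.
  rewrite coefB coefM coef_poly im binom_coef_vandermonde.
  have pab (j : 'I_i.+1) :=
    p_integralM HW (p_integral_binom HW j pa) (p_integral_binom HW (i - j) pb).
  have [_ ->] := @p_integral_sum _ _ _ HW _ (index_enum _) predT _ (fun j _ => (pab j).1).
  apply/eqP; rewrite subr_eq0; apply/eqP; apply: eq_bigr => j _.
  rewrite (pab j).2 !coef_poly.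
  have jm : (j < m)%N by apply: leq_ltn_trans im; rewrite -ltnS.
  by rewrite jm (leq_ltn_trans (leq_subr j i) im).
rewrite -[D](poly_take_drop m) tD add0r rmorphM rmorphXn /= horner_mx_X -mulmxE.
exact/dvdmx_mulr/dvdmx_exp.
Qed.

Lemma binom_pow_mxD a b : p_integral p a -> p_integral p b -> L a * L b = L (a + b).
Proof.
move=> pa pb; apply/eqP; rewrite -subr_eq0; apply/eqP/(dvdmx_expp_eq0 HW) => k.
have [N1 SN1] := binom_pow_mxP a k; have [N2 SN2] := binom_pow_mxP b k.
have [N3 SN3] := binom_pow_mxP (a + b) k.
set m := maxn (maxn N1 N2) (maxn N3 k).
have [/maxn_idPr m1 /maxn_idPr m2] : (N1 <= m)%N /\ (N2 <= m)%N.
  by rewrite !leq_max !leqnn !orbT.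
have [/maxn_idPr m3 km] : (N3 <= m)%N /\ (k <= m)%N by rewrite !leq_max !leqnn !orbT.
have -> : L a * L b - L (a + b) = - ((S a m - L a) * L b) - S a m * (S b m - L b)
    + (S a m * S b m - S (a + b) m) + (S (a + b) m - L (a + b)).
  by rewrite mulrBl mulrBr !opprB !addrA !subrK.
rewrite -!mulmxE; apply: dvdmxD; last by apply: SN3; rewrite -m3 leq_maxl.
apply: dvdmxD; last first.
  by apply: (dvdmx_exp2l km); rewrite !mulmxE; apply: binom_terms_mxM.
apply: dvdmxB; first by apply/dvdmxN/dvdmx_mull/SN1; rewrite -m1 leq_maxl.
by apply/dvdmx_mulr/SN2; rewrite -m2 leq_maxl.
Qed.

Lemma binom_pow_mx0 : L 0 = 1.
Proof.
apply: (mx_lim_unique HW (binom_pow_mxP 0)); apply: (@mx_lim_eventually _ _ _ _ _ 1).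
case=> // m _; elim: m => [|m IHm]; first exact: binom_terms_mx1.
rewrite binom_terms_mxS IHm /binom_coef big_ord_recl /= subrr !mul0r.
by rewrite (ratr_int _ 0) scale0r addr0.
Qed.

Lemma binom_pow_mx1 : L 1 = Y.
Proof.
apply: (mx_lim_unique HW (binom_pow_mxP 1)); apply: (@mx_lim_eventually _ _ _ _ _ 2).
case=> [|[|m]] // _; elim: m => [|m IHm].
  rewrite binom_terms_mxS binom_terms_mx1 /binom_coef big_ord1 subr0 divr1.
  by rewrite (ratr_nat _ 1) scale1r expr1 subrKC.
rewrite binom_terms_mxS IHm /binom_coef !big_ord_recl /= subrr mul0r mulr0 mul0r.
by rewrite (ratr_int _ 0) scale0r addr0.
Qed.

Lemma binom_pow_mxMn a k : p_integral p a -> L a ^+ k = L (k%:R * a).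
Proof.
move=> pa; elim: k => [|k IHk]; first by rewrite expr0 mul0r binom_pow_mx0.
have pk : p_integral p k%:R by rewrite pmulrn; apply: (p_integral_int HW).
rewrite exprSr IHk binom_pow_mxD ?(p_integralM HW pk pa).1 //.
by rewrite -natr1 mulrDl mul1r.
Qed.

Lemma binom_pow_mx_adj a (A : 'M[R]_n) :
  (Y - 1%:M)^T *m A = A *m (Y - 1%:M) -> (L a)^T *m A = A *m L a.
Proof.
move=> TA; have TkA k : ((Y - 1%:M) ^+ k)^T *m A = A *m (Y - 1%:M) ^+ k.
  elim: k => [|k IHk]; first by rewrite expr0 trmx1 mul1mx mulmx1.
  by rewrite exprS -mulmxE trmx_mul -mulmxA TA mulmxA IHk -mulmxA mulmxE -exprSr exprS.
have SA m : (S a m)^T *m A = A *m S a m.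
  rewrite /binom_terms_mx linear_sum /= mulmx_suml mulmx_sumr; apply: eq_bigr => j _.
  by rewrite linearZ /= -scalemxAl -scalemxAr TkA.
apply/eqP; rewrite -subr_eq0; apply/eqP/(dvdmx_expp_eq0 HW) => k.
have [N SN] := binom_pow_mxP a k.
have -> : (L a)^T *m A - A *m L a = A *m (S a N - L a) - (S a N - L a)^T *m A.
  by rewrite mulmxBr [(_ - _)^T]linearB /= mulmxBl SA opprB [in RHS]addrC addrA subrK.
apply: dvdmxB; first exact/dvdmx_mulr/SN.
exact/dvdmx_mull/dvdmx_tr/SN.
Qed.

End BinomialSeries.

Lemma binom_terms_mx_scalar (R : idomainType) a (y : R) m :
  binom_terms_mx a (y%:M : 'M_1) m = (binom_terms a y m)%:M.
Proof.
rewrite /binom_terms_mx /binom_terms raddf_sum /=; apply: eq_bigr => j _.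
by rewrite -scale_scalar_mx -raddfB /= rmorphXn.
Qed.

Section ScalarBinomialSeries.
Variables (R : idomainType) (p : nat) (phi : R -> R).
Hypothesis HW : W_setting p phi.
Local Notation P := (p%:R : R).
Variable y : R.
Hypothesis y1 : dvdR P (y - 1).

Lemma dvdmx_scalar_sub1 : dvdmx P ((y%:M : 'M_1) - 1%:M).
Proof.
by move=> i j; rewrite -raddfB mxE; case: (i == j); rewrite ?mulr1n ?mulr0n //; apply: dvdR0.
Qed.

Lemma binom_pow_scalar a : binom_pow p a y = binom_pow_mx p a (y%:M : 'M_1) 0 0.
Proof.
have yL : padic_lim p (binom_terms a y) (binom_pow_mx p a (y%:M : 'M_1) 0 0).
  move=> k; have [N SN] := binom_pow_mxP HW dvdmx_scalar_sub1 a k.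
  by exists N => m /SN /(_ 0 0); rewrite binom_terms_mx_scalar !mxE mulr1n.
rewrite /binom_pow; set L := epsilon _ _.
have yL' : padic_lim p (binom_terms a y) L by apply: epsilon_spec; eexists; apply: yL.
apply/eqP; rewrite -subr_eq0; apply/eqP/(separated HW) => k.
have [N1 SN1] := yL k; have [N2 SN2] := yL' k.
apply: (@dvdR_subr _ _ _ (binom_terms a y (maxn N1 N2))).
  by apply: SN2; rewrite leq_maxr.
by apply: SN1; rewrite leq_maxl.
Qed.

Lemma binom_pow_congr1 a : dvdR P (binom_pow p a y - 1).
Proof.
rewrite binom_pow_scalar; have := binom_pow_mx_congr1 HW dvdmx_scalar_sub1 a 0 0.
by rewrite !mxE.
Qed.

Lemma binom_pow_expn_inv a k : p_integral p a -> k%:R * a = -1 ->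
  binom_pow p a y ^+ k * y = 1.
Proof.
move=> pa ka; have Y1 := dvdmx_scalar_sub1.
have pN1 : p_integral p (-1) by apply: (p_integral_int HW (-1)).
have : binom_pow_mx p a (y%:M : 'M_1) ^+ k * y%:M = 1.
  rewrite (binom_pow_mxMn HW Y1) // ka -{2}(binom_pow_mx1 HW Y1).
  by rewrite (binom_pow_mxD HW Y1) // addNr (binom_pow_mx0 HW Y1).
rewrite binom_pow_scalar [binom_pow_mx _ _ _]mx11_scalar -rmorphXn -mulmxE -scalar_mxM.
by move=> /(congr1 (fun M : 'M_1 => M 0 0)); rewrite !mxE.
Qed.

End ScalarBinomialSeries.

Lemma selfadj_sqrt_form (R : comUnitRingType) n (A B L : 'M[R]_n) : A \in unitmx ->
  L^T *m A = A *m L -> L *m L = invmx A *m B -> L^T *m A *m L = B.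
Proof. by move=> uA LA LL; rewrite LA -mulmxA LL mulmxA mulmxV ?mul1mx. Qed.

Section Forms.
Variables (R : comUnitRingType) (n : nat) (q : 'M[R]_n).

Lemma unitmx_form_fixed (w : 'M[R]_n) : q \in unitmx -> w^T *m q *m w = q -> w \in unitmx.
Proof.
move=> uq wq; have : (invmx q *m w^T *m q) *m w = 1%:M.
  by rewrite -!mulmxA (mulmxA w^T) wq; apply: mulVmx.
by case/mulmx1_unit.
Qed.

Lemma form_mulmx_fixed (w v : 'M[R]_n) : w^T *m q *m w = q ->
  (w *m v)^T *m q *m (w *m v) = v^T *m q *m v.
Proof. by move=> wq; rewrite trmx_mul -{2}wq !mulmxA. Qed.

Lemma form_invmx_fixed (w : 'M[R]_n) : w \in unitmx -> w^T *m q *m w = q ->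
  (invmx w)^T *m q *m invmx w = q.
Proof.
move=> uw wq; rewrite -{1}wq !mulmxA -trmx_mul mulmxV // trmx1 mul1mx.
by rewrite -mulmxA mulmxV // mulmx1.
Qed.

End Forms.

Definition sign_mx (R : pzRingType) m n (q : 'M[R]_(m, n)) :=
  forall i j, q i j = 0 \/ q i j = 1 \/ q i j = -1.

Lemma map_sign_mx (R : pzRingType) m n (q : 'M[R]_(m, n)) (f : R -> R) :
  f 0 = 0 -> f 1 = 1 -> f (-1) = -1 -> sign_mx q -> map_mx f q = q.
Proof.
by move=> f0 f1 fN1 sq; apply/matrixP => i j; rewrite mxE; case: (sq i j) => [->|[->|->]].
Qed.

Lemma sign_block_mx (R : pzRingType) m1 m2 n1 n2 (a : 'M[R]_(m1, n1)) (b : 'M_(m1, n2))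
    (c : 'M_(m2, n1)) (d : 'M_(m2, n2)) :
  sign_mx a -> sign_mx b -> sign_mx c -> sign_mx d -> sign_mx (block_mx a b c d).
Proof.
move=> sa sb sc sd i j.
by case: (split_ordP i) => i' ->; case: (split_ordP j) => j' ->;
  rewrite ?block_mxEul ?block_mxEur ?block_mxEdl ?block_mxEdr.
Qed.

Lemma sign_mx0 (R : pzRingType) m n : sign_mx (0 : 'M[R]_(m, n)).
Proof. by left; rewrite mxE. Qed.

Lemma sign_mx1 (R : pzRingType) m : sign_mx (1%:M : 'M[R]_m).
Proof. by move=> i j; rewrite mxE; case: (i == j); [right; left | left]. Qed.

Lemma sign_mxN (R : pzRingType) m n (q : 'M[R]_(m, n)) : sign_mx q -> sign_mx (- q).
Proof.
by move=> sq i j; rewrite mxE; case: (sq i j) => [->|[->|->]]; rewrite ?oppr0 ?opprK; auto.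
Qed.

Section SplitForms.
Variables (R : idomainType) (r : nat).

Lemma q_sym_sign : sign_mx (q_sym R r).
Proof. by apply: sign_block_mx; apply: sign_mx0 || apply: sign_mx1. Qed.

Lemma q_alt_sign : sign_mx (q_alt R r).
Proof. by apply: sign_block_mx; do ?apply: sign_mxN; apply: sign_mx0 || apply: sign_mx1. Qed.

Lemma q_odd_sign : sign_mx (q_odd R r).
Proof. by apply: sign_block_mx; apply: sign_mx0 || apply: sign_mx1 || apply: q_sym_sign. Qed.

Lemma q_sym_tr : (q_sym R r)^T = q_sym R r.
Proof. by rewrite /q_sym tr_block_mx !trmx0 trmx1. Qed.

Lemma q_alt_tr : (q_alt R r)^T = - q_alt R r.
Proof. by rewrite /q_alt tr_block_mx opp_block_mx !trmx0 trmx1 linearN /= trmx1 oppr0 opprK. Qed.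

Lemma q_odd_tr : (q_odd R r)^T = q_odd R r.
Proof. by rewrite /q_odd tr_block_mx !trmx0 trmx1 q_sym_tr. Qed.

Lemma q_sym_sqr : q_sym R r *m q_sym R r = 1%:M.
Proof.
rewrite /q_sym mulmx_block !(mul0mx, mulmx0, mul1mx, add0r, addr0).
by rewrite -scalar_mx_block.
Qed.

Lemma q_alt_sqr : q_alt R r *m q_alt R r = - 1%:M.
Proof.
rewrite /q_alt mulmx_block !(mul0mx, mulmx0, mul1mx, mulmx1, mulNmx, add0r, addr0).
by rewrite (scalar_mx_block r r) opp_block_mx oppr0.
Qed.

Lemma q_odd_sqr : q_odd R r *m q_odd R r = 1%:M.
Proof.
rewrite /q_odd mulmx_block q_sym_sqr !(mul0mx, mulmx0, mul1mx, add0r, addr0).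
by rewrite -scalar_mx_block.
Qed.

Lemma q_sym_unitmx : q_sym R r \in unitmx.
Proof. by case/mulmx1_unit: q_sym_sqr. Qed.

Lemma q_alt_unitmx : q_alt R r \in unitmx.
Proof.
have : q_alt R r *m - q_alt R r = 1%:M by rewrite mulmxN q_alt_sqr opprK.
by case/mulmx1_unit.
Qed.

Lemma q_odd_unitmx : q_odd R r \in unitmx.
Proof. by case/mulmx1_unit: q_odd_sqr. Qed.

End SplitForms.

(** * The two types of [Delta] *)

Section TypeSL.
Variables (R : idomainType) (p : nat) (phi : R -> R).
Hypothesis HW : W_setting p phi.
Local Notation P := (p%:R : R).
Variables (n : nat) (x : 'M[R]_n).
Hypothesis x_unit : x \in unitmx.
Local Notation ratio := (\det (frobp p x) / \det x ^+ p).

Lemma dvdR_det_ratio : dvdR P (ratio - 1).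
Proof.
have udx : \det x ^+ p \is a GRing.unit by rewrite unitrX // -unitmxE.
by rewrite -[X in _ - X](divrr udx) -mulrBl; apply: dvdRMr; apply: (dvdR_det_frobp HW).
Qed.

Lemma PhiSL_frobp : PhiSL p x = lambdaSL p x *: frobp p x.
Proof.
have l1 : dvdR P (lambdaSL p x - 1) := binom_pow_congr1 HW dvdR_det_ratio _.
by rewrite /PhiSL /DeltaSL scalerA (mulr_p_divp l1) scalerBl scale1r addrC subrK.
Qed.

Lemma det_PhiSL : ~~ (p %| n)%N -> \det (PhiSL p x) = \det x ^+ p.
Proof.
move=> pNn; have n_neq0 : (n%:R : rat) != 0.
  by rewrite pnatr_eq0; apply: contraNneq pNn => ->.
have pa : p_integral p (- (n%:Q)^-1).
  apply: (p_integral_frac (n := -1) (d := n)) => //.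
  by rewrite mulNr mulVf ?mulrN1z // -pmulrn.
have l_n : lambdaSL p x ^+ n * ratio = 1.
  apply: (binom_pow_expn_inv HW dvdR_det_ratio pa).
  by rewrite -pmulrn mulrN mulfV.
have udx : \det x ^+ p \is a GRing.unit by rewrite unitrX // -unitmxE.
by rewrite PhiSL_frobp detZ -[\det (frobp p x)](divrK udx) mulrA l_n mul1r.
Qed.

End TypeSL.

Section TypeSO.
Variables (R : idomainType) (p : nat) (phi : R -> R).
Hypothesis HW : W_setting p phi.
Local Notation P := (p%:R : R).
Variables (n : nat) (q : 'M[R]_n) (e : R).
Hypotheses (q_unit : q \in unitmx) (qT : q^T = e *: q) (ee : e * e = 1).
Hypothesis q_frob : frobp p q = q.
Variables (x : 'M[R]_n).
Hypothesis x_unit : x \in unitmx.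
Local Notation F := (frobp p x).
Local Notation A := (F^T *m q *m F).
Local Notation B := (frobp p (x^T *m q *m x)).
Local Notation M := (invmx A *m B).

Lemma unitmx_frobp_form : A \in unitmx.
Proof. by rewrite !unitmx_mul unitmx_tr (unitmx_frobp HW) // q_unit. Qed.

Lemma dvdmx_frobp_form : dvdmx P (B - A).
Proof.
have -> : B - A = (B - frobp p (x^T *m q) *m F) + (frobp p (x^T *m q) - F^T *m q) *m F.
  by rewrite mulmxBl addrA subrK.
apply: dvdmxD; first exact: (dvdmx_frobp_mulmx HW).
by apply: dvdmx_mull; have := dvdmx_frobp_mulmx HW x^T q; rewrite frobp_tr q_frob.
Qed.

Lemma dvdmx_form_ratio_sub1 : dvdmx P (M - 1%:M).
Proof.
rewrite -(mulVmx unitmx_frobp_form) -mulmxBr.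
exact/dvdmx_mulr/dvdmx_frobp_form.
Qed.

(* [A] and [B] are both [e]-symmetric, so [A^-1 B] is self-adjoint for [A]. *)
Lemma form_ratio_adj : (M - 1%:M)^T *m A = A *m (M - 1%:M).
Proof.
have ue : e \is a GRing.unit by apply/unitrPr; exists e.
have AT : A^T = e *: A by rewrite !trmx_mul trmxK qT -scalemxAl -scalemxAr mulmxA.
have BT : B^T = e *: B.
  rewrite -frobp_tr !trmx_mul trmxK qT -!scalemxAl -!scalemxAr mulmxA frobpZ.
  by rewrite (sign_expp HW).
have MA : M^T *m A = B.
  rewrite trmx_mul trmx_inv AT BT invmxZ -?AT ?unitmx_tr ?unitmx_frobp_form //.
  rewrite -!scalemxAl -scalemxAr -scalemxAl scalerA mulrV // scale1r.
  by rewrite mulmxKV ?unitmx_frobp_form.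
rewrite linearB /= trmx1 mulmxBl mulmxBr MA mulmx1 mul1mx mulmxA mulmxV ?mul1mx //.
exact: unitmx_frobp_form.
Qed.

Lemma LambdaSO_congr1 : dvdmx P (LambdaSO p q x - 1).
Proof. exact: (binom_pow_mx_congr1 HW dvdmx_form_ratio_sub1). Qed.

Lemma LambdaSO_sqr : LambdaSO p q x *m LambdaSO p q x = M.
Proof.
have Y1 := dvdmx_form_ratio_sub1; have half := p_integral_half HW.
by rewrite mulmxE (binom_pow_mxD HW Y1) // -splitr (binom_pow_mx1 HW Y1).
Qed.

Lemma PhiSO_frobp : PhiSO p q x = F *m LambdaSO p q x.
Proof.
rewrite /PhiSO /DeltaSO scalemxAr scale_p_map_divp; last exact: LambdaSO_congr1.
by rewrite mulmxBr mulmx1 addrC subrK.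
Qed.

Lemma PhiSO_form : (PhiSO p q x)^T *m q *m PhiSO p q x = B.
Proof.
set L := LambdaSO p q x; rewrite PhiSO_frobp.
have -> : (F *m L)^T *m q *m (F *m L) = L^T *m A *m L by rewrite trmx_mul !mulmxA.
apply: selfadj_sqrt_form unitmx_frobp_form _ LambdaSO_sqr.
exact: (binom_pow_mx_adj HW dvdmx_form_ratio_sub1 _ form_ratio_adj).
Qed.

End TypeSO.

Section DeltaVanishes.
Variables (R : idomainType) (p : nat) (phi : {rmorphism R -> R}).
Hypothesis HW : W_setting p phi.

Lemma delta_det_SL n (u v : 'M[R]_n) : ~~ (p %| n)%N -> u \in unitmx ->
  inG (@PhiSL R p n) phi u v -> delta p phi (\det v) = 0.
Proof.
move=> pNn uu [uv phiv]; have uuv : u *m v \in unitmx by rewrite unitmx_mul uu uv.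
apply: (delta_frob HW); rewrite -det_map_mx phiv det_mulmx det_inv.
rewrite !(det_PhiSL HW) // det_mulmx exprMn mulrA mulVr ?mul1r //.
by rewrite unitrX // -unitmxE.
Qed.

Lemma delta_form_SO n (q : 'M[R]_n) e (u v : 'M[R]_n) :
  q \in unitmx -> q^T = e *: q -> e * e = 1 -> sign_mx q ->
  u^T *m q *m u = q -> inG (PhiSO p q) phi u v ->
  map_mx (delta p phi) (v^T *m q *m v) = 0.
Proof.
move=> uq qT ee sq uqu [uv phiv].
have q_frob : frobp p q = q.
  apply: map_sign_mx sq => /=; first by rewrite expr0n gtn_eqF ?(p_gt0 HW).
    exact: expr1n.
  by rewrite (sign_expp HW) // mulrNN mulr1.
have phiq : map_mx phi q = q by apply: map_sign_mx sq; rewrite ?rmorph0 ?rmorph1 ?rmorphN1.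
have uu : u \in unitmx := unitmx_form_fixed uq uqu.
have uuv : u *m v \in unitmx by rewrite unitmx_mul uu uv.
have Phi_form := PhiSO_form HW uq qT ee q_frob.
have Phiu : (PhiSO p q u)^T *m q *m PhiSO p q u = q by rewrite Phi_form // uqu.
have uPhiu : PhiSO p q u \in unitmx := unitmx_form_fixed uq Phiu.
(* [phi (v^T q v) = Phi(uv)^T (Phi(u)^-T q Phi(u)^-1) Phi(uv)] and [Phi(u)] fixes [q]. *)
apply: (map_mx_delta_frob HW).
rewrite !map_mxM -map_trmx phiq phiv form_mulmx_fixed ?form_invmx_fixed //.
by rewrite Phi_form // form_mulmx_fixed.
Qed.

End DeltaVanishes.

Theorem proposition3p6 (R : idomainType) (p : nat) (phi : {rmorphism R -> R}) :
  W_setting p phi ->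
  (forall (n : nat) (u : 'M[R]_n), ~~ (p %| n)%N -> u \in unitmx ->
     forall v : 'M[R]_n, inG (@PhiSL R p n) phi u v ->
       delta p phi (\det v) = 0)
  /\ (forall (r : nat) (u : 'M[R]_(r + r)),
       u^T *m q_alt R r *m u = q_alt R r ->
       forall v : 'M[R]_(r + r), inG (PhiSO p (q_alt R r)) phi u v ->
         map_mx (delta p phi) (v^T *m q_alt R r *m v) = 0)
  /\ (forall (r : nat) (u : 'M[R]_(r + r)),
       u^T *m q_sym R r *m u = q_sym R r -> \det u = 1 ->
       forall v : 'M[R]_(r + r), inG (PhiSO p (q_sym R r)) phi u v ->
         map_mx (delta p phi) (v^T *m q_sym R r *m v) = 0)
  /\ (forall (r : nat) (u : 'M[R]_(1 + (r + r))),
       u^T *m q_odd R r *m u = q_odd R r -> \det u = 1 ->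
       forall v : 'M[R]_(1 + (r + r)), inG (PhiSO p (q_odd R r)) phi u v ->
         map_mx (delta p phi) (v^T *m q_odd R r *m v) = 0).
Proof.
move=> HW; split; first by move=> n u pNn uu v; apply: delta_det_SL.
have signN1 : (-1 : R) * -1 = 1 by rewrite mulrNN mulr1.
split; first move=> r u uqu v.
  have qT : (q_alt R r)^T = -1 *: q_alt R r by rewrite q_alt_tr scaleN1r.
  exact (delta_form_SO HW (q_alt_unitmx R r) qT signN1 (@q_alt_sign R r) uqu).
split=> r u uqu _ v.
  have qT : (q_sym R r)^T = 1 *: q_sym R r by rewrite q_sym_tr scale1r.
  exact (delta_form_SO HW (q_sym_unitmx R r) qT (mulr1 1) (@q_sym_sign R r) uqu).
have qT : (q_odd R r)^T = 1 *: q_odd R r by rewrite q_odd_tr scale1r.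
exact (delta_form_SO HW (q_odd_unitmx R r) qT (mulr1 1) (@q_odd_sign R r) uqu).
Qed.
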